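(* Let $\mathcal A=(S,R)$ be a finitary argumentation network ($S\neq\varnothing$, $R\subseteq S\times S$, each element has finitely many attackers), and let $\Delta_{\mathcal A}$ be the $\mathbf{CN}$-theory $$\Delta_{\mathcal A}=\{x\mid x\in S \text{ unattacked}\}\cup\{y\leftrightarrow \textstyle\bigwedge_{zRy}Nz\mid y\in S\}\cup\{z\to Ny\mid zRy\}\cup\{(\textstyle\bigwedge_{zRy}\neg z)\wedge(\bigvee_{zRy}\neg Nz)\to \neg y\wedge\neg Ny\mid y\in S\}.$$ Let $E=\{x\in S\mid \Delta_{\mathcal A}\vdash_{\mathbf{CN}}x\}$. Then $E$ is the grounded extension of $\mathcal A$.
   Context: The logic $\mathbf{CN}$: the elements of $S$ are basic atoms; atomic formulas are $q$ and $Nq$ for basic atoms $q$; formulas are built with classical connectives; $\Delta\vdash_{\mathbf{CN}}A$ iff $\Delta\cup\{Nq\to\neg q\}\vdash A$ in classical propositional logic (treating each $q$ and $Nq$ as distinct classical atoms). Empty conjunctions are $\top$, empty disjunctions $\bot$. A complete extension of $(S,R)$ is a conflict-free set $E\subseteq S$ (no $x,y\in E$ with $xRy$) which contains exactly those arguments it defends ($x$ is defended by $E$ if every attacker of $x$ is attacked by some element of $E$); equivalently, the set of arguments labelled in by a legitimate Caminada labelling. The grounded (ground) extension is the least complete extension with respect to inclusion. *)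

From Stdlib Require Import List Bool.
Import ListNotations.
Set Implicit Arguments.

(* Atoms of CN over a set S of basic atoms: q and Nq. *)
Inductive cn_atom (S : Type) : Type :=
| Pos : S -> cn_atom S
| Nat : S -> cn_atom S.

Inductive form (S : Type) : Type :=
| FAtom : cn_atom S -> form S
| FTop : form S
| FBot : form S
| FNeg : form S -> form S
| FAnd : form S -> form S -> form S
| FOr  : form S -> form S -> form S
| FImp : form S -> form S -> form S
| FIff : form S -> form S -> form S.

Arguments FTop {S}.
Arguments FBot {S}.

Definition atm {S : Type} (q : S) : form S := FAtom (Pos q).
Definition Natm {S : Type} (q : S) : form S := FAtom (Nat q).

Definition bigAnd {S : Type} (l : list (form S)) : form S := fold_right (@FAnd S) FTop l.
Definition bigOr  {S : Type} (l : list (form S)) : form S := fold_right (@FOr S) FBot l.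

Fixpoint eval {S : Type} (v : cn_atom S -> bool) (A : form S) : bool :=
  match A with
  | FAtom a => v a
  | FTop => true
  | FBot => false
  | FNeg B => negb (eval v B)
  | FAnd B C => eval v B && eval v C
  | FOr B C => eval v B || eval v C
  | FImp B C => implb (eval v B) (eval v C)
  | FIff B C => eqb (eval v B) (eval v C)
  end.

(* Classical propositional consequence (for arbitrary, possibly infinite,
   theories), taken semantically (equivalent to derivability by
   soundness and strong completeness of classical propositional logic). *)
Definition CPL_cons {S : Type} (Gamma : form S -> Prop) (A : form S) : Prop :=
  forall v : cn_atom S -> bool,
    (forall B, Gamma B -> eval v B = true) -> eval v A = true.

Definition CN_axioms {S : Type} (B : form S) : Prop :=
  exists q : S, B = FImp (Natm q) (FNeg (atm q)).

Definition CN_cons {S : Type} (Delta : form S -> Prop) (A : form S) : Prop :=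
  CPL_cons (fun B => Delta B \/ CN_axioms B) A.

Definition finitary {S : Type} (R : S -> S -> Prop) : Prop :=
  forall y : S, exists l : list S, forall z, R z y <-> In z l.

Definition conflict_free {S : Type} (R : S -> S -> Prop) (E : S -> Prop) : Prop :=
  forall x y, E x -> E y -> ~ R x y.

Definition defends {S : Type} (R : S -> S -> Prop) (E : S -> Prop) (x : S) : Prop :=
  forall y, R y x -> exists z, E z /\ R z y.

Definition complete_ext {S : Type} (R : S -> S -> Prop) (E : S -> Prop) : Prop :=
  conflict_free R E /\ (forall x, E x <-> defends R E x).

Definition grounded_ext {S : Type} (R : S -> S -> Prop) (E : S -> Prop) : Prop :=
  complete_ext R E /\
  (forall E' : S -> Prop, complete_ext R E' -> forall x, E x -> E' x).

Definition attackers_list {S : Type} (R : S -> S -> Prop) (y : S) (l : list S) : Prop :=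
  forall z, R z y <-> In z l.

Definition Delta_A {S : Type} (R : S -> S -> Prop) (B : form S) : Prop :=
  (exists x, (forall z, ~ R z x) /\ B = atm x)
  \/ (exists y l, attackers_list R y l /\
        B = FIff (atm y) (bigAnd (map Natm l)))
  \/ (exists z y, R z y /\ B = FImp (atm z) (Natm y))
  \/ (exists y l, attackers_list R y l /\
        B = FImp (FAnd (bigAnd (map (fun z => FNeg (atm z)) l))
                       (bigOr (map (fun z => FNeg (Natm z)) l)))
                 (FAnd (FNeg (atm y)) (FNeg (Natm y)))).

(* A complete extension E yields a CN-model of Delta_A: make q true iff q is in E
   and Nq true iff q is attacked by E.  Hence every CN-consequence of Delta_A lies
   in every complete extension.  Conversely, in any CN-model of Delta_A the true
   basic atoms form a set closed under defence (an argument all of whose attackers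
   are attacked has all its Nz true, hence is true), so it contains the least
   defence-closed set, which is the grounded extension. *)

From Stdlib Require Import List Bool ClassicalEpsilon.
Set Implicit Arguments.

Definition asbool (P : Prop) : bool :=
  if excluded_middle_informative P then true else false.

Lemma asboolP (P : Prop) : reflect P (asbool P).
Proof. unfold asbool; destruct (excluded_middle_informative P); constructor; assumption. Qed.

Lemma eval_bigAnd {S : Type} (v : cn_atom S -> bool) (l : list (form S)) :
  eval v (bigAnd l) = true <-> forall f, In f l -> eval v f = true.
Proof.
  induction l as [|a l IH]; simpl.
  - split; [intros _ f []|auto].
  - rewrite andb_true_iff, IH. split.
    + intros [Ha Hl] f [<-|Hf]; auto.
    + intros H; split; auto.
Qed.

Lemma eval_bigOr {S : Type} (v : cn_atom S -> bool) (l : list (form S)) :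
  eval v (bigOr l) = true <-> exists f, In f l /\ eval v f = true.
Proof.
  induction l as [|a l IH]; simpl.
  - split; [discriminate|intros [f [[] _]]].
  - rewrite orb_true_iff, IH. split.
    + intros [H|[f [Hf H]]]; eauto.
    + intros [f [[<-|Hf] H]]; eauto.
Qed.

Lemma eval_FNeg {S : Type} (v : cn_atom S -> bool) (A : form S) :
  eval v (FNeg A) = true <-> eval v A <> true.
Proof. simpl; destruct (eval v A); simpl; split; congruence. Qed.

Lemma eval_FAnd {S : Type} (v : cn_atom S -> bool) (A B : form S) :
  eval v (FAnd A B) = true <-> eval v A = true /\ eval v B = true.
Proof. apply andb_true_iff. Qed.

Lemma eval_FImp {S : Type} (v : cn_atom S -> bool) (A B : form S) :
  eval v (FImp A B) = true <-> (eval v A = true -> eval v B = true).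
Proof. simpl; destruct (eval v A), (eval v B); simpl; split; auto. Qed.

Lemma eval_FIff {S : Type} (v : cn_atom S -> bool) (A B : form S) :
  eval v (FIff A B) = true <-> (eval v A = true <-> eval v B = true).
Proof. simpl; rewrite eqb_true_iff; apply eq_iff_eq_true. Qed.

Section Grounded.

Variable S : Type.
Variable R : S -> S -> Prop.

Definition CN_model (v : cn_atom S -> bool) : Prop :=
  forall B, Delta_A R B \/ CN_axioms B -> eval v B = true.

Definition attacked_by (E : S -> Prop) (x : S) : Prop := exists z, E z /\ R z x.

Definition ext_valuation (E : S -> Prop) (a : cn_atom S) : bool :=
  match a with
  | Pos x => asbool (E x)
  | Nat x => asbool (attacked_by E x)
  end.

Lemma defends_mono (X Y : S -> Prop) (x : S) :
  (forall y, X y -> Y y) -> defends R X x -> defends R Y x.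
Proof. intros XY D y Ryx. destruct (D y Ryx) as [z [Xz Rzy]]; eauto. Qed.

Lemma defends_attacked_by (E : S -> Prop) (y : S) (l : list S) :
  attackers_list R y l ->
  (defends R E y <-> forall z, In z l -> attacked_by E z).
Proof. intros Hl; split; intros H z Hz; apply H, Hl, Hz. Qed.

Section CompleteModel.

Variable E : S -> Prop.
Hypothesis E_complete : complete_ext R E.

Lemma eval_ext_atm (x : S) : eval (ext_valuation E) (atm x) = true <-> E x.
Proof. simpl; destruct (asboolP (E x)); split; congruence || tauto. Qed.

Lemma eval_ext_Natm (x : S) : eval (ext_valuation E) (Natm x) = true <-> attacked_by E x.
Proof. simpl; destruct (asboolP (attacked_by E x)); split; congruence || tauto. Qed.

Lemma eval_ext_bigAnd_Natm (l : list S) :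
  eval (ext_valuation E) (bigAnd (map Natm l)) = true <->
  forall z, In z l -> attacked_by E z.
Proof.
  rewrite eval_bigAnd; split.
  - intros H z Hz. apply eval_ext_Natm, H, in_map, Hz.
  - intros H f Hf. apply in_map_iff in Hf as [z [<- Hz]].
    apply eval_ext_Natm, H, Hz.
Qed.

Lemma complete_ext_CN_model : CN_model (ext_valuation E).
Proof.
  destruct E_complete as [Ecf Edef].
  intros B [HB|[q ->]].
  - destruct HB as [[x [Hx ->]]|[[y [l [Hl ->]]]|[[z [y [Rzy ->]]]|[y [l [Hl ->]]]]]].
    + apply eval_ext_atm, Edef. intros y Ryx; contradiction (Hx y).
    + rewrite eval_FIff, eval_ext_atm, eval_ext_bigAnd_Natm, <- (defends_attacked_by E Hl).
      apply Edef.
    + rewrite eval_FImp, eval_ext_atm, eval_ext_Natm. intros Ez; exists z; auto.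
    + rewrite eval_FImp, !eval_FAnd, !eval_FNeg, eval_ext_atm, eval_ext_Natm,
        eval_bigAnd, eval_bigOr.
      intros [Hnone [f [Hf Hz]]]. apply in_map_iff in Hf as [z [<- Hzl]].
      rewrite eval_FNeg, eval_ext_Natm in Hz. split.
      * intros Ey. apply Hz, (proj1 (Edef y) Ey), Hl, Hzl.
      * intros [w [Ew Rwy]]. apply Hl in Rwy.
        specialize (Hnone _ (in_map (fun z => FNeg (atm z)) _ _ Rwy)).
        rewrite eval_FNeg, eval_ext_atm in Hnone. exact (Hnone Ew).
  - rewrite eval_FImp, eval_FNeg, eval_ext_Natm, eval_ext_atm.
    intros [z [Ez Rzq]] Eq. exact (Ecf z q Ez Eq Rzq).
Qed.

Lemma CN_cons_in_complete_ext (x : S) : CN_cons (Delta_A R) (atm x) -> E x.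
Proof. intros Hx. apply eval_ext_atm, (Hx _ complete_ext_CN_model). Qed.

End CompleteModel.

(* The least fixed point of the defence operator, as an impredicative intersection. *)
Definition least_defended (x : S) : Prop :=
  forall X : S -> Prop, (forall y, defends R X y -> X y) -> X x.

Lemma defends_least_defended (x : S) : defends R least_defended x -> least_defended x.
Proof.
  intros D X Xclosed. apply Xclosed.
  eapply defends_mono; [|exact D]. intros y Gy; apply Gy, Xclosed.
Qed.

Lemma least_defended_defends (x : S) : least_defended x -> defends R least_defended x.
Proof.
  intros Gx. apply (Gx (defends R least_defended)). intros y D.
  eapply defends_mono; [|exact D]. exact defends_least_defended.
Qed.

Lemma least_defended_conflict_free : conflict_free R least_defended.
Proof.
  (* Induction on least_defended: its members not attacked by any of its members
     form a defence-closed set. *)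
  set (unattacked_in_G := fun x => least_defended x /\ forall y, least_defended y -> ~ R y x).
  assert (G_sub : forall x, least_defended x -> unattacked_in_G x).
  { intros x Gx. apply Gx. intros z D. split.
    - apply defends_least_defended. eapply defends_mono; [|exact D]. intros w []; auto.
    - intros y Gy Ryz. destruct (D y Ryz) as [w [[_ Hw] Rwy]].
      destruct (least_defended_defends Gy Rwy) as [u [Gu Ruw]].
      exact (Hw u Gu Ruw). }
  intros x y Gx Gy Rxy. exact (proj2 (G_sub y Gy) x Gx Rxy).
Qed.

Lemma least_defended_complete : complete_ext R least_defended.
Proof.
  split; [exact least_defended_conflict_free|].
  intros x; split; [apply least_defended_defends|apply defends_least_defended].
Qed.

Lemma CN_model_defence_closed (v : cn_atom S -> bool) :
  finitary R -> CN_model v ->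
  forall y, defends R (fun x => eval v (atm x) = true) y -> eval v (atm y) = true.
Proof.
  intros Hfin Hv y D. destruct (Hfin y) as [l Hl].
  assert (Hiff : eval v (FIff (atm y) (bigAnd (map Natm l))) = true).
  { apply Hv. left. right. left. exists y, l. auto. }
  apply eval_FIff in Hiff. apply Hiff, eval_bigAnd.
  intros f Hf. apply in_map_iff in Hf as [z [<- Hz]].
  destruct (D z (proj2 (Hl z) Hz)) as [w [Vw Rwz]].
  assert (Himp : eval v (FImp (atm w) (Natm z)) = true).
  { apply Hv. left. right. right. left. exists w, z. auto. }
  exact (proj1 (eval_FImp _ _ _) Himp Vw).
Qed.

Lemma least_defended_CN_cons (x : S) :
  finitary R -> least_defended x -> CN_cons (Delta_A R) (atm x).
Proof.
  intros Hfin Gx v Hv. exact (Gx _ (CN_model_defence_closed Hfin Hv)).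
Qed.

Lemma complete_ext_ext {E E' : S -> Prop} :
  (forall x, E x <-> E' x) -> complete_ext R E -> complete_ext R E'.
Proof.
  intros EE' [Ecf Edef]. split.
  - intros x y Hx Hy. apply Ecf; apply EE'; assumption.
  - intros x. rewrite <- EE', Edef.
    split; apply defends_mono; intros y; apply EE'.
Qed.

End Grounded.

Theorem theorem8 (S : Type) (R : S -> S -> Prop)
  (Hne : inhabited S) (Hfin : finitary R) :
  grounded_ext R (fun x : S => CN_cons (Delta_A R) (atm x)).
Proof.
  assert (consequences_eq : forall x,
             least_defended R x <-> CN_cons (Delta_A R) (atm x)).
  { intros x; split.
    - apply least_defended_CN_cons, Hfin.
    - apply CN_cons_in_complete_ext, least_defended_complete. }
  split.
  - exact (complete_ext_ext consequences_eq (least_defended_complete R)).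
  - intros E' HE' x. apply (CN_cons_in_complete_ext HE').
Qed.
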